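(* Let $\mathcal A,\mathcal B>0$, $\alpha,\beta\in(0,1)$, $h,\tau>0$, $M\ge 2$. Then the $(M-1)\times(M-1)$ matrices $A-g_0^{(\alpha,\beta)}B$ and $\widetilde A-g_0^{(\alpha,\beta)}\widetilde B$ (defined in the context) are nonsingular; consequently the time-stepping linear systems $$\big(A-g_0^{(\alpha,\beta)}B\big)\mathbf U^{k+1}=\big(A+g_1^{(\alpha,\beta)}B\big)\mathbf U^{k}+\sum_{\ell=2}^{k+1}g_\ell^{(\alpha,\beta)}B\,\mathbf U^{k+1-\ell}+\tau A\mathbf F^k+C_k$$ and $$\big(\widetilde A-g_0^{(\alpha,\beta)}\widetilde B\big)\mathbf U^{k+1}=\big(\widetilde A+g_1^{(\alpha,\beta)}\widetilde B\big)\mathbf U^{k}+\sum_{\ell=2}^{k+1}g_\ell^{(\alpha,\beta)}\widetilde B\,\mathbf U^{k+1-\ell}+\tau A\mathbf F^k+\widetilde C_k$$ are uniquely solvable for $\mathbf U^{k+1}$, for any given vectors $\mathbf U^0,\dots,\mathbf U^k,\mathbf F^k,C_k,\widetilde C_k\in\mathbb R^{M-1}$.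
   Context: $\varpi_\ell^{(\gamma)}=(-1)^\ell\binom{\gamma}{\ell}$, $g_0^{(\gamma)}=\frac{1+\gamma}{2}\varpi_0^{(\gamma)}$, $g_\ell^{(\gamma)}=\frac{1+\gamma}{2}\varpi_\ell^{(\gamma)}+\frac{1-\gamma}{2}\varpi_{\ell-1}^{(\gamma)}$ ($\ell\ge1$); $\mu_\alpha=\tau^\alpha\mathcal A/h^2$, $\mu_\beta=\tau^\beta\mathcal B/h^2$, $g_\ell^{(\alpha,\beta)}=\mu_\alpha g_\ell^{(1-\alpha)}+\mu_\beta g_\ell^{(1-\beta)}$. $A$ is the symmetric banded Toeplitz matrix of size $M-1$ with diagonal $\frac{14}{15}$, first off-diagonals $\frac{2}{45}$, second off-diagonals $-\frac1{90}$, zero elsewhere; $B$ is the symmetric banded Toeplitz matrix with diagonal $-\frac52$, first off-diagonals $\frac43$, second off-diagonals $-\frac1{12}$. $\widetilde A$ is the symmetric banded Toeplitz matrix with diagonal $\frac{27}{28}$, off-diagonals $\frac{3}{112}$, $-\frac{3}{280}$, $\frac1{560}$ (at distances $1,2,3$); $\widetilde B$ is the symmetric banded Toeplitz matrix with diagonal $-\frac{49}{18}$, off-diagonals $\frac32$, $-\frac{3}{20}$, $\frac1{90}$ (at distances $1,2,3$). These are the matrix forms of the sixth-order and eighth-order compact schemes for $u_t=(\mathcal A\,{}_{RL}D_{0,t}^{1-\alpha}+\mathcal B\,{}_{RL}D_{0,t}^{1-\beta})u_{xx}+f$, with $C_k,\widetilde C_k$ collecting boundary and ghost-point contributions. *)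

From HB Require Import structures.
From mathcomp Require Import all_boot all_order all_algebra.
From mathcomp Require Import reals exp.
Set Implicit Arguments. Unset Strict Implicit. Unset Printing Implicit Defensive.
Import Order.TTheory GRing.Theory Num.Theory.
Local Open Scope ring_scope.

Section Defs.
Variable R : realType.

Definition gbinom (gamma : R) (l : nat) : R :=
  \prod_(i < l) ((gamma - i%:R) / (i.+1)%:R).

Definition varpi (gamma : R) (l : nat) : R := (-1) ^+ l * gbinom gamma l.

Definition gw (gamma : R) (l : nat) : R :=
  match l with
  | 0 => (1 + gamma) / 2 * varpi gamma 0
  | l'.+1 => (1 + gamma) / 2 * varpi gamma l + (1 - gamma) / 2 * varpi gamma l'
  end.

Definition mu (tau gam cA h : R) : R := powR tau gam * cA / h ^+ 2.

Definition gab (cA cB alpha beta tau h : R) (l : nat) : R :=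
  mu tau alpha cA h * gw (1 - alpha) l + mu tau beta cB h * gw (1 - beta) l.

Definition ndist (i j : nat) : nat := (i - j) + (j - i).

Definition toeplitz (n : nat) (c : nat -> R) : 'M[R]_n :=
  \matrix_(i < n, j < n) c (ndist i j).

Definition cA6 (d : nat) : R :=
  match d with 0 => 14%:R / 15%:R | 1 => 2%:R / 45%:R | 2 => - (1 / 90%:R) | _ => 0 end.
Definition cB6 (d : nat) : R :=
  match d with 0 => - (5%:R / 2) | 1 => 4%:R / 3%:R | 2 => - (1 / 12%:R) | _ => 0 end.
Definition cA8 (d : nat) : R :=
  match d with 0 => 27%:R / 28%:R | 1 => 3%:R / 112%:R | 2 => - (3%:R / 280%:R)
  | 3 => 1 / 560%:R | _ => 0 end.
Definition cB8 (d : nat) : R :=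
  match d with 0 => - (49%:R / 18%:R) | 1 => 3%:R / 2 | 2 => - (3%:R / 20%:R)
  | 3 => 1 / 90%:R | _ => 0 end.

Definition matA n := toeplitz n cA6.
Definition matB n := toeplitz n cB6.
Definition matAt n := toeplitz n cA8.
Definition matBt n := toeplitz n cB8.
End Defs.

From HB Require Import structures.
From mathcomp Require Import all_boot all_order all_algebra.
From mathcomp Require Import reals exp.
From mathcomp Require Import zify ring lra.
Set Implicit Arguments. Unset Strict Implicit. Unset Printing Implicit Defensive.
Import Order.TTheory GRing.Theory Num.Theory.
Local Open Scope ring_scope.

(* For g = g_0 > 0 both matrices A - g B are positive definite, hence
   invertible.  The quadratic form of a symmetric banded Toeplitz matrix is a
   combination of the autocorrelations sum_i x_i x_{i+d} (d <= 3) of the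
   zero-extended vector, and the forms of A and -B are nonnegative combinations
   of squared norms of short difference filters applied to x, plus a positive
   multiple of |x|^2 in the case of A. *)

Lemma sumr_nat_shift (R : zmodType) (f : nat -> R) N :
  f 0%N = 0 -> f N = 0 -> \sum_(0 <= k < N) f k.+1 = \sum_(0 <= k < N) f k.
Proof.
move=> f0 fN; have := erefl (\sum_(0 <= k < N.+1) f k).
by rewrite {1}big_nat_recl // big_nat_recr //= f0 fN addr0 add0r.
Qed.

Section Autocorrelation.
Variables (R : realFieldType) (n : nat) (x : 'rV[R]_n).

Definition zext (k : nat) : R :=
  if @insub _ (fun m => (m < n)%N) 'I_n k is Some i then x 0 i else 0.

Lemma zext_ord (i : 'I_n) : zext i = x 0 i.
Proof. by rewrite /zext valK. Qed.

Lemma zext_ge k : (n <= k)%N -> zext k = 0.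
Proof. by move=> le_nk; rewrite /zext insubF // ltnNge le_nk. Qed.

Definition autocorr (d : nat) : R := \sum_(0 <= i < n) zext i * zext (i + d)%N.

Lemma autocorr0_gt0 : x != 0 -> 0 < autocorr 0.
Proof.
move=> x_neq0; have sq_ge0 (i : 'I_n) : true -> 0 <= x 0 i * x 0 i.
  by rewrite -expr2 sqr_ge0.
have -> : autocorr 0 = \sum_(i < n) x 0 i * x 0 i.
  by rewrite /autocorr big_mkord; apply: eq_bigr => i _; rewrite addn0 zext_ord.
rewrite lt_def sumr_ge0 // andbT; apply: contra x_neq0 => /eqP sum0.
apply/eqP/rowP => i; rewrite mxE.
by have /eqP := @psumr_eq0P _ _ _ _ sq_ge0 sum0 i isT; rewrite mulf_eq0 orbb => /eqP.
Qed.

(* [x] shifted three places to the right, so that the filters below, which look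
   up to three places back, never leave [nat]. *)
Definition pad (k : nat) : R := if (3 <= k)%N then zext (k - 3) else 0.

Lemma pad_lt3 k : (k < 3)%N -> pad k = 0.
Proof. by move=> lt_k3; rewrite /pad leqNgt lt_k3. Qed.

Lemma pad_ge k : (n + 3 <= k)%N -> pad k = 0.
Proof. by move=> le_k; rewrite /pad; case: ifP => // _; apply: zext_ge; lia. Qed.

Definition padcorr (a b : nat) : R :=
  \sum_(0 <= k < (n + 6)%N) pad (k + a)%N * pad (k + b)%N.

Lemma padcorrS a b : (a < 3)%N -> padcorr a.+1 b.+1 = padcorr a b.
Proof.
move=> lt_a3; rewrite /padcorr -(@sumr_nat_shift _ (fun k => pad (k + a)%N * pad (k + b)%N)).
- by apply: eq_bigr => k _; rewrite !addSnnS.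
- by rewrite pad_lt3 ?mul0r.
- by rewrite pad_ge ?mul0r //; lia.
Qed.

Lemma padcorr3 d : padcorr 3 (3 + d)%N = autocorr d.
Proof.
rewrite /padcorr (big_cat_nat (leq0n n) (leq_addr 6 n)) /=.
rewrite [X in _ + X]big_nat_cond [X in _ + X]big1 ?addr0 => [|k /andP[/andP[le_nk _] _]].
  apply: eq_bigr => k _; rewrite /pad !leq_addl !addnK.
  by rewrite [(k + (3 + d))%N]addnCA leq_addr addKn.
by rewrite /pad leq_addl addnK zext_ge ?mul0r.
Qed.

Lemma padcorr_lag a d : (a <= 3)%N -> padcorr a (a + d)%N = autocorr d.
Proof.
move=> le_a3; rewrite -padcorr3 -(subnK le_a3).
have : (3 - a + a <= 3)%N by rewrite subnK.
elim: (3 - a)%N => // m IH le_m3.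
by rewrite IH ?addSn ?padcorrS //; lia.
Qed.

Lemma autocorr_filter_ge0 (a0 a1 a2 a3 : R) :
  0 <= (a0 ^+ 2 + a1 ^+ 2 + a2 ^+ 2 + a3 ^+ 2) * autocorr 0
       + 2 * (a0 * a1 + a1 * a2 + a2 * a3) * autocorr 1
       + 2 * (a0 * a2 + a1 * a3) * autocorr 2 + 2 * (a0 * a3) * autocorr 3.
Proof.
pose y k := a0 * pad k + a1 * pad k.+1 + a2 * pad k.+2 + a3 * pad k.+3.
have : 0 <= \sum_(0 <= k < (n + 6)%N) y k ^+ 2 by apply: sumr_ge0 => k _; apply: sqr_ge0.
have -> : \sum_(0 <= k < (n + 6)%N) y k ^+ 2 =
    a0 ^+ 2 * padcorr 0 0 + a1 ^+ 2 * padcorr 1 1 + a2 ^+ 2 * padcorr 2 2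
    + a3 ^+ 2 * padcorr 3 3 + 2 * a0 * a1 * padcorr 0 1 + 2 * a0 * a2 * padcorr 0 2
    + 2 * a0 * a3 * padcorr 0 3 + 2 * a1 * a2 * padcorr 1 2
    + 2 * a1 * a3 * padcorr 1 3 + 2 * a2 * a3 * padcorr 2 3.
  rewrite /padcorr !mulr_sumr -!big_split /=; apply: eq_bigr => k _.
  by rewrite /y !addn0 !addn1 !addn2 !addn3; ring.
by rewrite !padcorr_lag // => ge0; lra.
Qed.

End Autocorrelation.

Lemma band4E (R : pzRingType) (c : nat -> R) m :
  (forall k, (4 <= k)%N -> c k = 0) ->
  c m = c 0%N * (m == 0%N)%:R + c 1%N * (m == 1%N)%:R + c 2%N * (m == 2%N)%:R
        + c 3%N * (m == 3%N)%:R.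
Proof.
move=> c_band; case: m => [|[|[|[|m]]]] /=; rewrite ?mulr1 ?mulr0 ?addr0 ?add0r //.
by rewrite c_band.
Qed.

Lemma ndist_eqE (R : pzRingType) i j d : (0 < d)%N ->
  (ndist i j == d)%:R = (j == i + d)%N%:R + (i == j + d)%N%:R :> R.
Proof.
move=> d_gt0; rewrite /ndist.
case: eqP; case: eqP; case: eqP => /= *; rewrite ?addr0 ?add0r //; lia.
Qed.

(* The [+ 0] lets [sum_lag_pairs] treat the diagonal as the lag-0 case. *)
Lemma ndist_eq0 i j : (ndist i j == 0%N) = (j == i + 0)%N.
Proof. by rewrite /ndist; case: eqP; case: eqP => //; lia. Qed.

Lemma sumr_nat_indicator (R : pzRingType) (f : nat -> R) N m :
  \sum_(0 <= j < N) (j == m)%:R * f j = if (m < N)%N then f m else 0.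
Proof.
elim: N => [|N IH]; first by rewrite big_geq.
rewrite big_nat_recr //= IH ltnS.
by case: ltngtP => [lt_mN|lt_Nm|->]; rewrite ?eqxx ?mul1r ?mul0r ?add0r ?addr0.
Qed.

Definition qform (R : pzRingType) n (T : 'M[R]_n) (x : 'rV[R]_n) : R :=
  (x *m T *m x^T) 0 0.

Section ToeplitzForm.
Variables (R : realType) (n : nat) (x : 'rV[R]_n).

Lemma qform_toeplitz c :
  qform (toeplitz n c) x =
  \sum_(0 <= i < n) \sum_(0 <= j < n) c (ndist i j) * (zext x i * zext x j).
Proof.
rewrite /qform big_mkord mxE.
under eq_bigr => j _ do rewrite !mxE mulr_suml.
rewrite exchange_big /=; apply: eq_bigr => i _; rewrite big_mkord.
by apply: eq_bigr => j _; rewrite !mxE !zext_ord; ring.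
Qed.

Lemma sum_lag_pairs d :
  \sum_(0 <= i < n) \sum_(0 <= j < n) (j == i + d)%N%:R * (zext x i * zext x j)
  = autocorr x d.
Proof.
apply: eq_bigr => i _; under eq_bigr => j _ do rewrite mulrCA.
rewrite -mulr_sumr sumr_nat_indicator; case: ltnP => // le_n.
by rewrite (zext_ge x le_n).
Qed.

Lemma sum_lag_pairsC d :
  \sum_(0 <= i < n) \sum_(0 <= j < n) (i == j + d)%N%:R * (zext x i * zext x j)
  = autocorr x d.
Proof.
rewrite exchange_big -sum_lag_pairs /=.
by apply: eq_bigr => i _; apply: eq_bigr => j _; rewrite [zext x j * _]mulrC.
Qed.

Lemma qform_toeplitz_band c : (forall k, (4 <= k)%N -> c k = 0) ->
  qform (toeplitz n c) x = c 0%N * autocorr x 0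
    + 2 * (c 1%N * autocorr x 1 + c 2%N * autocorr x 2 + c 3%N * autocorr x 3).
Proof.
move=> c_band; rewrite qform_toeplitz.
under eq_bigr => i _ do (under eq_bigr => j _ do
  rewrite (band4E _ c_band) ndist_eq0 !ndist_eqE // !mulrDr !mulrDl -!mulrA;
  rewrite !big_split /= -!mulr_sumr).
rewrite !big_split /= -!mulr_sumr !sum_lag_pairs !sum_lag_pairsC.
by ring.
Qed.

End ToeplitzForm.

Lemma qformB (R : comPzRingType) n (T S : 'M[R]_n) g x :
  qform (T - g *: S) x = qform T x - g * qform S x.
Proof. by rewrite /qform mulmxBr mulmxBl -scalemxAr -scalemxAl !mxE. Qed.

Lemma unitmx_qform_gt0 (R : numFieldType) n (T : 'M[R]_n) :
  (forall x, x != 0 -> 0 < qform T x) -> T \in unitmx.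
Proof.
move=> T_pd; rewrite unitmxE unitfE; apply/negP => /det0P [x x_neq0 xT0].
by have := T_pd x x_neq0; rewrite /qform xT0 mul0mx mxE ltxx.
Qed.

Lemma unitmx_sub_scale (R : realFieldType) n (T S : 'M[R]_n) g :
  (forall x, x != 0 -> 0 < qform T x) -> (forall x, qform S x <= 0) -> 0 <= g ->
  T - g *: S \in unitmx.
Proof.
move=> T_pd S_nsd g_ge0; apply: unitmx_qform_gt0 => x x_neq0.
rewrite qformB subr_gt0; apply: le_lt_trans (T_pd x x_neq0).
by rewrite mulr_ge0_le0.
Qed.

Section CompactSchemes.
Variables (R : realType) (n : nat).

(* The certificates are sums of squares of difference filters of the
   zero-extended vector:
     x^T A x  = 2/45 |x_i + x_{i+1}|^2 + 1/90 |x_i - x_{i+2}|^2 + 37/45 |x|^2,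
    -x^T B x  = 1/12 |x_i - 2 x_{i+1} + x_{i+2}|^2 + |x_i - x_{i+1}|^2,
     x^T A~ x = 3/112 |x_i + x_{i+1}|^2 + 3/280 |x_i - x_{i+2}|^2
                + 1/560 |x_i + x_{i+3}|^2 + 31/35 |x|^2,
    -x^T B~ x = 1/90 |x_i - 3 x_{i+1} + 3 x_{i+2} - x_{i+3}|^2 - x^T B x. *)

Lemma qform_matA_gt0 x : x != 0 -> 0 < qform (matA R n) x.
Proof.
move=> x_neq0; rewrite qform_toeplitz_band /=; last by case=> [|[|[|[|]]]].
have := autocorr0_gt0 x_neq0.
have := autocorr_filter_ge0 x 1 1 0 0; have := autocorr_filter_ge0 x 1 0 (-1) 0.
lra.
Qed.

Lemma qform_matB_le0 x : qform (matB R n) x <= 0.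
Proof.
rewrite qform_toeplitz_band /=; last by case=> [|[|[|[|]]]].
have := autocorr_filter_ge0 x 1 (-2) 1 0; have := autocorr_filter_ge0 x 1 (-1) 0 0.
lra.
Qed.

Lemma qform_matAt_gt0 x : x != 0 -> 0 < qform (matAt R n) x.
Proof.
move=> x_neq0; rewrite qform_toeplitz_band /=; last by case=> [|[|[|[|]]]].
have := autocorr0_gt0 x_neq0.
have := autocorr_filter_ge0 x 1 1 0 0; have := autocorr_filter_ge0 x 1 0 (-1) 0.
have := autocorr_filter_ge0 x 1 0 0 1.
lra.
Qed.

Lemma qform_matBt_le0 x : qform (matBt R n) x <= 0.
Proof.
rewrite qform_toeplitz_band /=; last by case=> [|[|[|[|]]]].
have := autocorr_filter_ge0 x 1 (-3) 3 (-1).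
have := autocorr_filter_ge0 x 1 (-2) 1 0; have := autocorr_filter_ge0 x 1 (-1) 0 0.
lra.
Qed.

End CompactSchemes.

Lemma varpi0 (R : realType) (gamma : R) : varpi gamma 0 = 1.
Proof. by rewrite /varpi /gbinom big_ord0 mulr1. Qed.

Lemma mu_gt0 (R : realType) (tau gam c h : R) :
  0 < tau -> 0 < c -> 0 < h -> 0 < mu tau gam c h.
Proof. by move=> *; rewrite /mu divr_gt0 ?mulr_gt0 ?powR_gt0 ?exprn_gt0. Qed.

Lemma gab0_gt0 (R : realType) (cA cB alpha beta tau h : R) :
  0 < cA -> 0 < cB -> alpha < 1 -> beta < 1 -> 0 < h -> 0 < tau ->
  0 < gab cA cB alpha beta tau h 0.
Proof.
move=> cA_gt0 cB_gt0 alpha_lt1 beta_lt1 h_gt0 tau_gt0.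
rewrite /gab /gw !varpi0 !mulr1.
by apply: addr_gt0; apply: mulr_gt0; rewrite ?mu_gt0 //; lra.
Qed.

Lemma unitmx_solve_uniq (R : comUnitRingType) n (T : 'M[R]_n) (b : 'cV[R]_n) :
  T \in unitmx -> exists! v : 'cV[R]_n, T *m v = b.
Proof.
move=> T_unit; exists (invmx T *m b); split; first by rewrite mulmxA mulmxV ?mul1mx.
by move=> v <-; rewrite mulmxA mulVmx ?mul1mx.
Qed.

Theorem theorem1 (R : realType) (cA cB alpha beta h tau : R) (M : nat)
  (hA : 0 < cA) (hB : 0 < cB)
  (ha0 : 0 < alpha) (ha1 : alpha < 1) (hb0 : 0 < beta) (hb1 : beta < 1)
  (hh : 0 < h) (htau : 0 < tau) (hM : (2 <= M)%N) :
  let n := M.-1 in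
  let g := gab cA cB alpha beta tau h in
  let A := matA R n in let B := matB R n in
  let At := matAt R n in let Bt := matBt R n in
  (A - g 0%N *: B) \in unitmx /\ (At - g 0%N *: Bt) \in unitmx /\
  (forall (k : nat) (U : nat -> 'cV[R]_n) (F C Ct : 'cV[R]_n),
     (exists! V : 'cV[R]_n,
        (A - g 0%N *: B) *m V =
          (A + g 1%N *: B) *m U k
          + \sum_(2 <= l < k.+2) (g l *: B) *m U (k.+1 - l)%N
          + tau *: (A *m F) + C) /\
     (exists! V : 'cV[R]_n,
        (At - g 0%N *: Bt) *m V =
          (At + g 1%N *: Bt) *m U k
          + \sum_(2 <= l < k.+2) (g l *: Bt) *m U (k.+1 - l)%N
          + tau *: (A *m F) + Ct)).
Proof.
move=> n g A B At Bt.
have g0_ge0 : 0 <= g 0%N by apply/ltW/gab0_gt0.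
have A_unit : A - g 0%N *: B \in unitmx.
  exact: unitmx_sub_scale (@qform_matA_gt0 R n) (@qform_matB_le0 R n) g0_ge0.
have At_unit : At - g 0%N *: Bt \in unitmx.
  exact: unitmx_sub_scale (@qform_matAt_gt0 R n) (@qform_matBt_le0 R n) g0_ge0.
by do 2!split=> //; move=> k U F C Ct; split; exact: unitmx_solve_uniq.
Qed.
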